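(* Let $P,R\in\mathrm{Sym}(n,\mathbb{R})$, $Q\in\mathrm{Mat}(n,\mathbb{R})$ with $\langle Pv,v\rangle\ge C_1|v|^2$ for some $C_1>0$ and all $v$. For $\lambda\in\mathbb{R}$ let $B_\lambda=\begin{bmatrix}P^{-1}&-P^{-1}Q\\-Q^TP^{-1}&Q^TP^{-1}Q-R-\lambda I_n\end{bmatrix}$ and $J=\begin{bmatrix}0&-I_n\\ I_n&0\end{bmatrix}$. If $JB_0$ is hyperbolic, then $JB_\lambda$ is hyperbolic for every $\lambda\ge0$.
   Context: A real matrix is hyperbolic if it has no eigenvalue on the imaginary axis. *)

From HB Require Import structures.
From mathcomp Require Import all_boot all_order all_algebra.
From mathcomp Require Import complex.
Set Implicit Arguments. Unset Strict Implicit. Unset Printing Implicit Defensive.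
Import Order.TTheory GRing.Theory Num.Theory.
Local Open Scope ring_scope.

(* The real numbers are modelled by an arbitrary real closed field R
   (this includes the reals); complex numbers are R[i] = complex R. *)

Definition cplx_mx (R : rcfType) (m : nat) (M : 'M[R]_m) : 'M[R[i]]_m :=
  map_mx (real_complex R) M.

Definition hyperbolic (R : rcfType) (m : nat) (M : 'M[R]_m) : Prop :=
  forall z : R[i], eigenvalue (cplx_mx M) z -> complex.Re z != 0.

Definition Jmx (R : rcfType) (n : nat) : 'M[R]_(n + n) :=
  block_mx 0 (- 1%:M) 1%:M 0.

Definition Bmx (R : rcfType) (n : nat) (P Q Rm : 'M[R]_n) (lam : R)
  : 'M[R]_(n + n) :=
  block_mx (invmx P) (- (invmx P *m Q))
           (- (Q^T *m invmx P)) (Q^T *m invmx P *m Q - Rm - lam%:M).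

Definition inner (R : rcfType) (n : nat) (u v : 'cV[R]_n) : R :=
  \sum_(i < n) u i 0 * v i 0.

From HB Require Import structures.
From mathcomp Require Import all_boot all_order all_algebra.
From mathcomp Require Import complex polyrcf.
From mathcomp Require Import ring.
Import Order.TTheory GRing.Theory Num.Theory.
Local Open Scope ring_scope.
Set Implicit Arguments. Unset Strict Implicit. Unset Printing Implicit Defensive.

(* Purely imaginary eigenvalues i w of J B_lam are the real w for which the
   Hermitian pencil H(w) + lam is singular, where H(w) = R + w K + w^2 P and
   K = i (Q^T - Q).  Hyperbolicity of J B_0 says that H(w) is nonsingular for
   every real w.  A family of Hermitian matrices depending polynomially on a
   real parameter keeps its inertia as long as it stays nonsingular: the
   coefficients of det (X + H(s)) are real polynomials in s, all positive
   exactly when H(s) is positive definite, and they can only leave the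
   positive cone at a parameter where H(s) is singular.  The reversed pencil
   G(u) = P + u K + u^2 R = u^2 H(1/u) is nonsingular as well and equals the
   positive definite P at u = 0, so G is positive definite everywhere; as
   H(1) = G(1), so is H, and then H(w) + lam is nonsingular for lam >= 0. *)

Lemma coef_prod_XsubC_real (C : numDomainType) (s : seq C) k :
  all (fun x => x \is Num.real) s -> (\prod_(x <- s) ('X - x%:P))`_k \is Num.real.
Proof.
elim: s k => [k _|x s IH k /= /andP [xr sr]].
  by rewrite big_nil coef1; case: (k == 0)%N.
rewrite big_cons mulrBl coefB coefXM coefCM.
apply: realB; first by case: (k == 0)%N; [exact: real0 | exact: IH].
by apply: realM => //; apply: IH.
Qed.

Lemma coef_prod_XsubC_neg (C : numDomainType) (s : seq C) k :
  all (fun x => x < 0) s ->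
  0 <= (\prod_(x <- s) ('X - x%:P))`_k /\
  ((k <= size s)%N -> 0 < (\prod_(x <- s) ('X - x%:P))`_k).
Proof.
elim: s k => [k _|x s IH k /= /andP [x_lt0 s_lt0]].
  by rewrite big_nil coef1; case: k.
rewrite big_cons mulrBl coefB coefXM coefCM -mulNr.
have Nx_gt0 : 0 < - x by rewrite oppr_gt0.
have Nx_ge0 := ltW Nx_gt0.
case: k => [|k] /=.
  have [_ /(_ (leq0n _)) p0_gt0] := IH 0%N s_lt0.
  by rewrite add0r; split=> [|_]; [apply/ltW/mulr_gt0 | apply: mulr_gt0].
have [pk_ge0 pk_gt0] := IH k s_lt0; have [pSk_ge0 _] := IH k.+1 s_lt0.
split=> [|k_le]; first by apply: addr_ge0 => //; apply: mulr_ge0.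
by apply: ltr_pwDl; [apply: pk_gt0 | apply: mulr_ge0].
Qed.

Lemma horner_gt0_coef_ge0 (C : numDomainType) (p : {poly C}) t :
  (forall k, 0 <= p`_k) -> 0 < p`_0 -> 0 <= t -> 0 < p.[t].
Proof.
move=> p_ge0 p0_gt0 t_ge0; rewrite horner_coef.
have : (0 < size p)%N.
  by rewrite lt0n size_poly_eq0; apply: contraTneq p0_gt0 => ->; rewrite coef0 ltxx.
case: (size p) => // m _; rewrite big_ord_recl expr0 mulr1.
by apply: ltr_pwDl => //; apply: sumr_ge0 => i _; apply: mulr_ge0; rewrite ?exprn_ge0.
Qed.

Lemma horner_char_poly (F : comNzRingType) n (A : 'M[F]_n) x :
  (char_poly A).[x] = \det (x%:M - A).
Proof.
rewrite /char_poly -horner_evalE -(det_map_mx (horner_eval x)).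
congr (\det _); apply/matrixP => i j; rewrite !mxE /= horner_evalE !hornerE.
by rewrite hornerMn hornerX.
Qed.

Lemma coef0_char_poly_opp (F : comNzRingType) n (A : 'M[F]_n) :
  (char_poly (- A))`_0 = \det A.
Proof.
by rewrite char_poly_det -scaleN1r detZ mulrA -exprMn mulrNN mulr1 expr1n mul1r.
Qed.

Lemma char_poly_similar (F : fieldType) n (P D : 'M[F]_n) :
  P \in unitmx -> char_poly (invmx P *m D *m P) = char_poly D.
Proof.
move=> P_unit; rewrite /char_poly /char_poly_mx.
set P' := map_mx polyC P.
have P'_unit : P' \in unitmx by rewrite map_unitmx.
rewrite !map_mxM map_invmx -/P'.
have eX : ('X%:M : 'M[{poly F}]_n) = invmx P' *m 'X%:M *m P'.
  by rewrite mul_mx_scalar -scalemxAl mulVmx // scalemx1.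
by rewrite {1}eX -mulmxBl -mulmxBr !det_mulmx mulrC mulrA -det_mulmx mulmxV // det1 mul1r.
Qed.

(* For a Hermitian matrix [A] this says that all eigenvalues of [A] are
   positive, i.e. that [A] is positive definite. *)
Definition posdef_char (C : numDomainType) n (A : 'M[C]_n) : Prop :=
  forall k, (k <= n)%N -> 0 < (char_poly (- A))`_k.

Lemma det_shift_gt0 (C : numDomainType) n (A : 'M[C]_n) t :
  (forall k, (k <= n)%N -> 0 <= (char_poly (- A))`_k) -> 0 < \det A -> 0 <= t ->
  0 < \det (t%:M + A).
Proof.
move=> coef_ge0 detA_gt0 t_ge0; rewrite -[A]opprK -horner_char_poly.
apply: horner_gt0_coef_ge0; rewrite ?coef0_char_poly_opp // => k.
by case: (leqP k n) => [/coef_ge0 // | n_lt_k]; rewrite nth_default // size_char_poly.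
Qed.

Lemma posdef_char_det_shift (C : numDomainType) n (A : 'M[C]_n) t :
  posdef_char A -> 0 <= t -> \det (t%:M + A) != 0.
Proof.
move=> A_pos t_ge0; apply/lt0r_neq0/det_shift_gt0 => // [k /A_pos/ltW //|].
by rewrite -coef0_char_poly_opp; apply: A_pos.
Qed.

Section Hermitian.
Variable C : numClosedFieldType.

Lemma hermsymmx_entryP n (A : 'M[C]_n) :
  reflect (forall i j, A i j = (A j i)^*) (A \is hermsymmx).
Proof.
apply: (iffP idP) => [/is_hermitianmxP eA i j|eA]; last apply/is_hermitianmxP.
  by rewrite {1}eA expr0 scale1r !mxE.
by rewrite expr0 scale1r; apply/matrixP => i j; rewrite !mxE.
Qed.

Lemma hermsymmxN n (A : 'M[C]_n) : A \is hermsymmx -> - A \is hermsymmx.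
Proof.
by move=> /hermsymmx_entryP eA; apply/hermsymmx_entryP => i j; rewrite !mxE eA rmorphN.
Qed.

Lemma hermitian_char_poly_split n (A : 'M[C]_n) : A \is hermsymmx ->
  exists2 s : seq C, all (fun x => x \is Num.real) s &
    char_poly A = \prod_(x <- s) ('X - x%:P).
Proof.
move=> A_herm; have /mxOverP diag_real := hermitian_spectral_diag_real A_herm.
have /hermitian_normalmx/orthomx_spectralP eA := A_herm.
exists [seq spectral_diag A 0 i | i <- enum 'I_n].
  by apply/allP => x /mapP [i _ ->]; apply: diag_real.
rewrite {1}eA char_poly_similar ?spectral_unit // char_poly_trig ?diag_mx_is_trig //.
by rewrite big_map big_enum; apply: eq_bigr => i _; rewrite mxE eqxx mulr1n.
Qed.

Lemma hermitian_char_poly_coef_real n (A : 'M[C]_n) k :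
  A \is hermsymmx -> (char_poly A)`_k \is Num.real.
Proof.
by move=> /hermitian_char_poly_split [s s_real ->]; apply: coef_prod_XsubC_real.
Qed.

Lemma hermitian_posdef_char_shift n (A : 'M[C]_n) :
  A \is hermsymmx -> (forall t : C, 0 <= t -> \det (t%:M + A) != 0) ->
  posdef_char A.
Proof.
move=> A_herm det_shift k k_le.
have [s s_real charE] := hermitian_char_poly_split (hermsymmxN A_herm).
have s_neg : all (fun x => x < 0) s.
  apply/allP => x xs; have x_real : x \is Num.real by apply: (allP s_real).
  rewrite real_ltNge ?real0 //; apply/negP => x_ge0.
  have := det_shift x x_ge0; rewrite -[A]opprK -horner_char_poly charE.
  rewrite horner_prod prodf_seq_eq0 /= => /negP; apply; apply/hasP; exists x => //.
  by rewrite !hornerE subrr.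
have size_s : size s = n.
  by have := size_char_poly (- A); rewrite charE size_prod_XsubC => -[].
by rewrite charE; apply: (coef_prod_XsubC_neg k s_neg).2; rewrite size_s.
Qed.

Lemma hermitian_posdef_char n (A : 'M[C]_n) :
  A \is hermsymmx -> \det A != 0 ->
  (forall k, (k <= n)%N -> 0 <= (char_poly (- A))`_k) -> posdef_char A.
Proof.
move=> A_herm detA coef_ge0; apply: hermitian_posdef_char_shift => // t t_ge0.
apply/lt0r_neq0/det_shift_gt0 => //.
by rewrite lt_def detA -coef0_char_poly_opp coef_ge0.
Qed.

Definition quad_pencil n (A0 A1 A2 : 'M[C]_n) (x : C) : 'M[C]_n :=
  A0 + x *: A1 + x ^+ 2 *: A2.

Lemma hermitian_quad_pencil n (A0 A1 A2 : 'M[C]_n) x : x \is Num.real ->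
  A0 \is hermsymmx -> A1 \is hermsymmx -> A2 \is hermsymmx ->
  quad_pencil A0 A1 A2 x \is hermsymmx.
Proof.
move=> /conj_Creal x_real /hermsymmx_entryP e0 /hermsymmx_entryP e1 /hermsymmx_entryP e2.
apply/hermsymmx_entryP => i j.
by rewrite !mxE !rmorphD !rmorphM ?rmorphXn /= x_real -e0 -e1 -e2.
Qed.

Lemma quad_pencil0 n (A0 A1 A2 : 'M[C]_n) : quad_pencil A0 A1 A2 0 = A0.
Proof. by rewrite /quad_pencil expr0n /= !scale0r !addr0. Qed.

Lemma quad_pencil1 n (A0 A1 A2 : 'M[C]_n) :
  quad_pencil A0 A1 A2 1 = quad_pencil A2 A1 A0 1.
Proof. by rewrite /quad_pencil expr1n !scale1r addrC [A0 + _]addrC addrA. Qed.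

Lemma quad_pencil_rev n (A0 A1 A2 : 'M[C]_n) x : x != 0 ->
  quad_pencil A0 A1 A2 x = x ^+ 2 *: quad_pencil A2 A1 A0 x^-1.
Proof. by move=> x0; apply/matrixP => i j; rewrite !mxE; field. Qed.

End Hermitian.

Lemma poly_first_root (R : rcfType) (p : {poly R}) a b x :
  p.[a] != 0 -> x \in `[a, b] -> root p x ->
  exists s, [/\ a < s, s <= b, root p s & forall z, a < z < s -> ~~ root p z].
Proof.
move=> pa_neq0 xab px.
have p_neq0 : p != 0 by apply: contraNneq pa_neq0 => ->; rewrite hornerC.
have ax : a < x.
  by rewrite lt_neqAle (itvP xab) andbT; apply: contraNneq pa_neq0 => ->.
have xb : x <= b by rewrite (itvP xab).
case: (next_rootP p a b) => [p0|y _ py y_itv no_root|c _ _ no_root].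
- by rewrite p0 eqxx in p_neq0.
- by exists y; split; rewrite ?(itvP y_itv) ?rootE ?py.
- exists x; split => // z /andP [az zx]; apply: no_root.
  by rewrite in_itv /= az (lt_le_trans zx xb).
Qed.

Lemma polys_gt0_propagate_ge (R : rcfType) (I : finType) (F : I -> {poly R}) a b :
  (forall s, (forall i, 0 <= (F i).[s]) -> forall i, 0 < (F i).[s]) ->
  (forall i, 0 < (F i).[a]) -> a <= b -> forall i, 0 < (F i).[b].
Proof.
move=> ge0_gt0 Fa_gt0 ab i; rewrite ltNge; apply/negP => Fib_le0.
pose G := \prod_j F j.
have rootG j z : root (F j) z -> root G z.
  by move=> /eqP Fjz; rewrite /root /G horner_prod (bigD1 j) //= Fjz mul0r.
have Ga_neq0 : G.[a] != 0.
  by rewrite /G horner_prod; apply/lt0r_neq0/prodr_gt0 => j _.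
have [x xab rx] : {x | x \in `[a, b] & root (F i) x}.
  by apply: polyrcf.poly_ivt; rewrite ?pmulr_rle0.
have [s [as_lt sb rs no_root]] := poly_first_root Ga_neq0 xab (rootG _ _ rx).
have Fs_ge0 j : 0 <= (F j).[s].
  rewrite leNgt; apply/negP => Fjs_lt0.
  have [z zas rz] : {z | z \in `[a, s] & root (F j) z}.
    by apply: polyrcf.poly_ivt; rewrite ?pmulr_rle0 ?ltW.
  have za : z != a by apply: contraTneq rz => ->; rewrite rootE gt_eqF.
  have zs : z != s by apply: contraTneq rz => ->; rewrite rootE lt_eqF.
  apply: (negP (no_root z _)) (rootG _ _ rz).
  by rewrite !lt_neqAle eq_sym za zs !(itvP zas).
move: rs; rewrite /root /G horner_prod => /prodf_eq0 [j _] /eqP Fjs0.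
by have := ge0_gt0 s Fs_ge0 j; rewrite Fjs0 ltxx.
Qed.

Lemma polys_gt0_propagate (R : rcfType) (I : finType) (F : I -> {poly R}) a b :
  (forall s, (forall i, 0 <= (F i).[s]) -> forall i, 0 < (F i).[s]) ->
  (forall i, 0 < (F i).[a]) -> forall i, 0 < (F i).[b].
Proof.
move=> ge0_gt0 Fa_gt0; have [ab|ba] := leP a b.
  exact: polys_gt0_propagate_ge.
pose F' i := F i \Po - 'X.
have F'E i s : (F' i).[s] = (F i).[- s] by rewrite horner_comp !hornerE.
move=> i; rewrite -[b]opprK -F'E; apply: (@polys_gt0_propagate_ge _ _ F' (- a)).
- by move=> s F's_ge0 j; rewrite F'E; apply: ge0_gt0 => k; rewrite -F'E.
- by move=> j; rewrite F'E opprK.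
- by rewrite lerN2 ltW.
Qed.

Definition Re_poly (R : rcfType) (p : {poly R[i]}) : {poly R} :=
  \poly_(k < size p) complex.Re p`_k.

Lemma Re_poly_horner (R : rcfType) (p : {poly R[i]}) (s : R) :
  complex.Re p.[s%:C%C] = (Re_poly p).[s].
Proof.
rewrite horner_coef (horner_coef_wide _ (size_poly _ _)) raddf_sum /=.
apply: eq_bigr => k _; rewrite coef_poly ltn_ord -rmorphXn /=.
by case: (p`_k) => u v /=; rewrite mulr0 subr0.
Qed.

Lemma ltr0c (R : rcfType) (x : R) : (0 < x%:C%C) = (0 < x).
Proof. exact: ltcR. Qed.

Lemma hermitian_family_posdef_char (R : rcfType) n (M : 'M[{poly R[i]}]_n) (a b : R) :
  (forall s : R, map_mx (horner_eval s%:C%C) M \is hermsymmx) ->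
  (forall s : R, \det (map_mx (horner_eval s%:C%C) M) != 0) ->
  posdef_char (map_mx (horner_eval a%:C%C) M) ->
  posdef_char (map_mx (horner_eval b%:C%C) M).
Proof.
move=> M_herm M_nsing Ma_pos.
pose F k := Re_poly (char_poly (- M))`_k.
have coefE s k :
    (char_poly (- map_mx (horner_eval s%:C%C) M))`_k = ((F k).[s])%:C%C.
  rewrite -Re_poly_horner RRe_real -?horner_evalE -?coef_map map_char_poly map_mxN //.
  exact: hermitian_char_poly_coef_real (hermsymmxN (M_herm s)).
have posE s : posdef_char (map_mx (horner_eval s%:C%C) M) <->
    forall k : 'I_n.+1, 0 < (F k).[s].
  split=> [pos k | pos k k_le]; first by rewrite -ltr0c -coefE pos // -ltnS.
  by rewrite coefE ltr0c (pos (Ordinal (k_le : (k < n.+1)%N))).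
apply/posE; apply: (@polys_gt0_propagate _ _ (fun k : 'I_n.+1 => F k) a); last first.
  exact/posE.
move=> s Fs_ge0.
apply/(posE s)/hermitian_posdef_char; [exact: M_herm | exact: M_nsing | move=> k k_le].
by rewrite coefE ler0c (Fs_ge0 (Ordinal (k_le : (k < n.+1)%N))).
Qed.

Lemma quad_pencil_posdef_char (R : rcfType) n (A0 A1 A2 : 'M[R[i]]_n) (a b : R) :
  A0 \is hermsymmx -> A1 \is hermsymmx -> A2 \is hermsymmx ->
  (forall s : R, \det (quad_pencil A0 A1 A2 s%:C%C) != 0) ->
  posdef_char (quad_pencil A0 A1 A2 a%:C%C) -> posdef_char (quad_pencil A0 A1 A2 b%:C%C).
Proof.
move=> A0_herm A1_herm A2_herm nsing.
pose M := map_mx polyC A0 + 'X *: map_mx polyC A1 + 'X^2 *: map_mx polyC A2.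
have ME x : map_mx (horner_eval x) M = quad_pencil A0 A1 A2 x.
  by apply/matrixP => i j; rewrite !mxE /= horner_evalE !hornerE.
rewrite -!ME; apply: hermitian_family_posdef_char => s; rewrite ME; last exact: nsing.
apply: (hermitian_quad_pencil _ A0_herm A1_herm A2_herm).
by apply/complex_realP; exists s.
Qed.

Lemma inner_scalel (R : rcfType) n (c : R) (v w : 'cV[R]_n) :
  inner (c *: v) w = c * inner v w.
Proof. by rewrite /inner mulr_sumr; apply: eq_bigr => i _; rewrite mxE mulrA. Qed.

Lemma inner_self_gt0 (R : rcfType) n (v : 'cV[R]_n) : v != 0 -> 0 < inner v v.
Proof.
move=> v_neq0; have sqr_ge0 (i : 'I_n) : 0 <= v i 0 * v i 0 by rewrite -expr2 sqr_ge0.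
rewrite lt_def sumr_ge0 // andbT; apply: contraNneq v_neq0 => /eqP.
rewrite psumr_eq0 // => /allP vi0; apply/eqP/matrixP => i j; rewrite ord1 mxE.
by have /(_ (mem_index_enum _)) := vi0 i; rewrite mulf_eq0 orbb => /eqP.
Qed.

Lemma coercive_add_scalar_unit (R : rcfType) n (P : 'M[R]_n) (C1 : R) :
  0 < C1 -> (forall v, C1 * inner v v <= inner (P *m v) v) ->
  forall t, 0 <= t -> P + t%:M \in unitmx.
Proof.
move=> C1_gt0 coerP t t_ge0; rewrite -unitmx_tr unitmxE unitfE.
apply/negP => /det0P [v v_neq0 /(congr1 trmx)].
rewrite trmx_mul trmxK trmx0 mulmxDl mul_scalar_mx => /eqP; rewrite addr_eq0 => /eqP Pv.
have vT_neq0 : v^T != 0 by rewrite -(inj_eq (@trmx_inj _ _ _)) trmxK trmx0.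
have := coerP v^T; rewrite Pv -scaleNr inner_scalel ler_pM2r ?inner_self_gt0 //.
by move=> /(lt_le_trans C1_gt0); rewrite oppr_gt0 ltNge t_ge0.
Qed.

Lemma conjC_real_complex (R : rcfType) (x : R) : (x%:C%C)^* = x%:C%C.
Proof. by apply/conj_Creal/complex_realP; exists x. Qed.

Lemma hermitian_cplx_mx (R : rcfType) n (A : 'M[R]_n) :
  A^T = A -> cplx_mx A \is hermsymmx.
Proof.
move=> symA; apply/hermsymmx_entryP => i j.
by rewrite !mxE conjC_real_complex -{1}symA mxE.
Qed.

Lemma hermitian_cplx_skew (R : rcfType) n (Q : 'M[R]_n) :
  'i *: ((cplx_mx Q)^T - cplx_mx Q) \is hermsymmx.
Proof.
apply/hermsymmx_entryP => i j; rewrite !mxE rmorphM rmorphB /= conjCi !conjC_real_complex.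
by ring.
Qed.

Lemma coercive_posdef_char (R : rcfType) n (P : 'M[R]_n) (C1 : R) :
  P^T = P -> 0 < C1 -> (forall v, C1 * inner v v <= inner (P *m v) v) ->
  posdef_char (cplx_mx P).
Proof.
move=> symP C1_gt0 coerP; apply: hermitian_posdef_char_shift.
  exact: hermitian_cplx_mx.
move=> t t_ge0; have [r tE] : exists r, t = r%:C%C by apply/complex_realP/ger0_real.
move: t_ge0; rewrite tE ler0c => r_ge0.
have -> : (r%:C%C)%:M + cplx_mx P = cplx_mx (P + r%:M).
  by rewrite /cplx_mx map_mxD map_scalar_mx addrC.
rewrite det_map_mx fmorph_eq0 -unitfE -unitmxE.
exact: (coercive_add_scalar_unit C1_gt0 coerP).
Qed.

Lemma hyperbolicP (R : rcfType) n (A : 'M[R]_n) :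
  hyperbolic A <-> forall w : R, ~~ eigenvalue (cplx_mx A) ('i * w%:C%C).
Proof.
split=> [hypA w | no_eig z eig_z].
  by apply: contraTN isT => /hypA; rewrite -complexiE /= mul0r mulr0 subrr eqxx.
apply: contraNneq (no_eig (complex.Im z)) => Re0.
by rewrite {1}[z]complexE Re0 rmorph0 add0r complexiE in eig_z.
Qed.

Lemma eigenvalue_hamiltonian (F : fieldType) n (P Q S : 'M[F]_n) z :
  P \in unitmx ->
  eigenvalue (block_mx 0 (- 1%:M) 1%:M 0 *m
     block_mx (invmx P) (- (invmx P *m Q)) (- (Q^T *m invmx P))
              (Q^T *m invmx P *m Q - S)) z =
  (\det (S - z ^+ 2 *: P + z *: (Q^T - Q)) == 0).
Proof.
move=> P_unit; rewrite eigenvalue_root_char rootE horner_char_poly.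
set W := S - _ + _.
pose swap : 'M[F]_(n + n) := block_mx 0 1%:M 1%:M 0.
have [swap_unit _] : swap \in unitmx /\ swap \in unitmx.
  by apply: mulmx1_unit; rewrite mulmx_block !mulmx0 !mulmx1 !addr0 !add0r -scalar_mx_block.
(* Column operations by [[P, Q + zP], [0, 1]] and a block swap make
   [z - JB] block triangular with diagonal blocks [-W] and [-1]. *)
have reduce : (z%:M - block_mx 0 (- 1%:M) 1%:M 0 *m
     block_mx (invmx P) (- (invmx P *m Q)) (- (Q^T *m invmx P)) (Q^T *m invmx P *m Q - S))
    *m block_mx P (Q + z *: P) 0 1%:M = block_mx (z *: P - Q^T) (- W) (- 1%:M) 0.
  rewrite mulmx_block !mul0mx !mul1mx !mulNmx !mul1mx !add0r !addr0 (scalar_mx_block n n).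
  rewrite opp_block_mx add_block_mx mulmx_block !mulmx0 !mulmx1 !addr0 ?mul0mx ?add0r.
  rewrite !opprK !mulmxBl !mulmxDr -!mulmxA !mul_scalar_mx !mulNmx -!scalemxAr.
  rewrite !mulVmx // !mulmx1 scalemx1.
  by congr block_mx; apply/matrixP => i j; rewrite !mxE; ring.
have swapped : block_mx (z *: P - Q^T) (- W) (- 1%:M) 0 *m swap =
    block_mx (- W) (z *: P - Q^T) 0 (- 1%:M).
  by rewrite mulmx_block !mulmx0 !mulmx1 !addr0 !add0r.
have := congr1 (fun M => \det (M *m swap)) reduce; rewrite /= swapped.
have detN (A : 'M[F]_n) : \det (- A) = (-1) ^+ n * \det A by rewrite -scaleN1r detZ.
rewrite !det_mulmx det_ublock det1 mulr1 det_ublock !detN det1 mulr1.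
rewrite [X in _ = X]mulrAC -exprMn mulrN1 opprK expr1n mul1r => <-.
have [detP detS] : \det P != 0 /\ \det swap != 0 by rewrite -!unitfE -!unitmxE.
by rewrite !mulf_eq0 (negbTE detP) (negbTE detS) !orbF.
Qed.

Lemma hyperbolic_JBP (R : rcfType) n (P Q Rm : 'M[R]_n) (lam : R) :
  P \in unitmx ->
  hyperbolic (Jmx R n *m Bmx P Q Rm lam) <->
  forall w : R, \det ((lam%:C%C)%:M + quad_pencil (cplx_mx Rm)
      ('i *: ((cplx_mx Q)^T - cplx_mx Q)) (cplx_mx P) w%:C%C) != 0.
Proof.
move=> P_unit; rewrite hyperbolicP.
suff eigE w : eigenvalue (cplx_mx (Jmx R n *m Bmx P Q Rm lam)) ('i * w%:C%C) =
    (\det ((lam%:C%C)%:M + quad_pencil (cplx_mx Rm)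
      ('i *: ((cplx_mx Q)^T - cplx_mx Q)) (cplx_mx P) w%:C%C) == 0).
  by split=> h w; have := h w; rewrite eigE.
set Pc := cplx_mx P; set Qc := cplx_mx Q; set Rc := cplx_mx Rm.
have -> : cplx_mx (Jmx R n *m Bmx P Q Rm lam) = block_mx 0 (- 1%:M) 1%:M 0 *m
    block_mx (invmx Pc) (- (invmx Pc *m Qc)) (- (Qc^T *m invmx Pc))
             (Qc^T *m invmx Pc *m Qc - (Rc + (lam%:C%C)%:M)).
  rewrite /cplx_mx /Jmx /Bmx map_mxM !map_block_mx !map_mxN map_mx0 map_mx1.
  by rewrite !map_mxB !map_mxM !map_invmx !map_trmx map_scalar_mx opprD addrA.
have Pc_unit : Pc \in unitmx by rewrite map_unitmx.
rewrite (eigenvalue_hamiltonian _ _ _ Pc_unit); congr (\det _ == 0).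
by apply/matrixP => i j; rewrite !mxE exprMn sqrCi; ring.
Qed.

Theorem lemma2p3 (R : rcfType) (n : nat) (P Q Rm : 'M[R]_n) :
  P^T = P -> Rm^T = Rm ->
  (exists C1 : R, 0 < C1 /\
     forall v : 'cV[R]_n, C1 * inner v v <= inner (P *m v) v) ->
  hyperbolic (Jmx R n *m Bmx P Q Rm 0) ->
  forall lam : R, 0 <= lam -> hyperbolic (Jmx R n *m Bmx P Q Rm lam).
Proof.
move=> symP symR [C1 [C1_gt0 coerP]] hyp0 lam lam_ge0.
have P_unit : P \in unitmx.
  by have := coercive_add_scalar_unit C1_gt0 coerP (lexx 0); rewrite -scalemx1 scale0r addr0.
set Pc := cplx_mx P; set Rc := cplx_mx Rm; set K := 'i *: ((cplx_mx Q)^T - cplx_mx Q).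
have [Pc_herm Rc_herm K_herm] : [/\ Pc \is hermsymmx, Rc \is hermsymmx & K \is hermsymmx].
  by split; [exact: hermitian_cplx_mx | exact: hermitian_cplx_mx | exact: hermitian_cplx_skew].
have H_nsing (w : R) : \det (quad_pencil Rc K Pc w%:C%C) != 0.
  by have := (hyperbolic_JBP _ _ _ P_unit).1 hyp0 w; rewrite rmorph0 add0r.
have G_nsing (u : R) : \det (quad_pencil Pc K Rc u%:C%C) != 0.
  have [->|u_neq0] := eqVneq u 0.
    by rewrite rmorph0 quad_pencil0 det_map_mx fmorph_eq0 -unitfE -unitmxE.
  have uC_neq0 : u%:C%C != 0 by rewrite fmorph_eq0.
  by rewrite quad_pencil_rev // detZ mulf_neq0 ?expf_neq0 // -fmorphV H_nsing.
have G_pos (u : R) : posdef_char (quad_pencil Pc K Rc u%:C%C).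
  apply: (quad_pencil_posdef_char (a := 0)) => //.
  by rewrite rmorph0 quad_pencil0; apply: coercive_posdef_char C1_gt0 coerP.
have H_pos (w : R) : posdef_char (quad_pencil Rc K Pc w%:C%C).
  apply: (quad_pencil_posdef_char (a := 1)) => //.
  by have := G_pos 1; rewrite rmorph1 quad_pencil1.
apply/(hyperbolic_JBP _ _ _ P_unit) => w.
by apply: (posdef_char_det_shift (H_pos w)); rewrite ler0c.
Qed.
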